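(* Let $(U_a, U_b, R_a, R_b)$ be a belief structure, with $R_a \subseteq U_a \times U_b$ and $R_b \subseteq U_b \times U_a$. Suppose that for every predicate $p$ on $U_a$ in some class of predicates there is $x_0 \in U_a$ such that (1) $R_a(x_0) \subseteq \{ y \mid R_b(y) = \{ x \mid p(x) \} \}$, and (2) $\exists y.\, R_a(x_0, y)$. Suppose moreover that this class contains the predicates $q(x) \equiv \exists y. [R_a(x,y) \wedge R_b(y,x)]$ and $p(x) \equiv O(q(x))$. Then every unary propositional operator $O$ has a fixpoint: with $x_0$ chosen for the predicate $p(x) \equiv O(q(x))$, one has $O(q(x_0)) \Leftrightarrow q(x_0)$.
   Context: A belief structure is $(U_a, U_b, R_a, R_b)$ with relations $R_a \subseteq U_a \times U_b$, $R_b \subseteq U_b \times U_a$; $R_a(x)$ denotes $\{y \mid R_a(x,y)\}$. Assumption (1) says $x_0$ believes that $y$ assumes $p$, modally $x_0 \models \Box_a \boxplus_b p \wedge \Diamond_a \top$ together with (2). The Basic Lemma gives, under (1) and (2), $p(x_0) \Leftrightarrow \exists y.[R_a(x_0,y) \wedge R_b(y,x_0)]$. *)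

Definition believes_assumes {Ua Ub : Type}
  (Ra : Ua -> Ub -> Prop) (Rb : Ub -> Ua -> Prop) (p : Ua -> Prop) (x0 : Ua) : Prop :=
  forall y, Ra x0 y -> forall x, Rb y x <-> p x.

Definition nonempty_belief {Ua Ub : Type} (Ra : Ua -> Ub -> Prop) (x0 : Ua) : Prop :=
  exists y, Ra x0 y.

Definition diag_q {Ua Ub : Type}
  (Ra : Ua -> Ub -> Prop) (Rb : Ub -> Ua -> Prop) (x : Ua) : Prop :=
  exists y, Ra x y /\ Rb y x.


(* If every agent x0 regards as possible assumes exactly p, then x0 satisfies
   the diagonal predicate iff it satisfies p: instantiate the belief at x0
   itself. Taking p := O ∘ diag_q then makes diag_q x0 a fixpoint of O. *)

Lemma believes_assumes_diag_q {Ua Ub : Type}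
  (Ra : Ua -> Ub -> Prop) (Rb : Ub -> Ua -> Prop) (p : Ua -> Prop) (x0 : Ua) :
  believes_assumes Ra Rb p x0 -> nonempty_belief Ra x0 ->
  (p x0 <-> diag_q Ra Rb x0).
Proof.
  intros Hbel [y Hy]. split.
  - intro Hp. exists y. split; [exact Hy | exact (proj2 (Hbel y Hy x0) Hp)].
  - intros [y' [Hy' Hb]]. exact (proj1 (Hbel y' Hy' x0) Hb).
Qed.

Theorem lemma2 (Ua Ub : Type) (Ra : Ua -> Ub -> Prop) (Rb : Ub -> Ua -> Prop)
  (C : (Ua -> Prop) -> Prop)
  (HC : forall p : Ua -> Prop, C p ->
        exists x0, believes_assumes Ra Rb p x0 /\ nonempty_belief Ra x0)
  (O : Prop -> Prop)
  (Hq : C (diag_q Ra Rb))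
  (Hp : C (fun x => O (diag_q Ra Rb x))) :
  (exists x0, believes_assumes Ra Rb (fun x => O (diag_q Ra Rb x)) x0
              /\ nonempty_belief Ra x0)
  /\ (forall x0, believes_assumes Ra Rb (fun x => O (diag_q Ra Rb x)) x0 ->
                 nonempty_belief Ra x0 ->
                 (O (diag_q Ra Rb x0) <-> diag_q Ra Rb x0)).
Proof.
  split.
  - exact (HC _ Hp).
  - intros x0. exact (believes_assumes_diag_q Ra Rb _ x0).
Qed.
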